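(* For any $X_0,X_1\in2^\omega$, the map $r\mapsto\operatorname{Mix}(X_0,X_1,r)$ from $[0,1]$ to $2^\omega$ is continuous with respect to the Besicovitch pseudometric $d$ on $2^\omega$.
   Context: $d(X,Y)=\limsup_{n}|\{m<n:X(m)\ne Y(m)\}|/n$. For $X,Y\in2^\omega$, $(X\oplus Y)(2n)=X(n)$, $(X\oplus Y)(2n+1)=Y(n)$. The map $b:[0,1]\to2^\omega$ is defined recursively by $b(0)=0^\omega$, $b(1)=1^\omega$, $b(r)=0^\omega\oplus b(2r)$ for $0<r\le1/2$, $b(r)=b(2r-1)\oplus1^\omega$ for $1/2\le r<1$. Chunks: $n_j=\sum_{i<j}i$, $I_j=[n_j,n_{j+1})$. $\operatorname{Mix}(X_0,X_1,r)$ is the sequence whose restriction to $I_j$ equals $X_{b(r)(j)}\restriction I_j$ for every $j$. *)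

From Stdlib Require Import Reals Lra Lia List ClassicalEpsilon.
From Coquelicot Require Import Coquelicot.
Open Scope R_scope.

Definition cantor := nat -> bool.

Definition ndiff (X Y : cantor) (n : nat) : nat :=
  length (filter (fun m => negb (Bool.eqb (X m) (Y m))) (seq 0 n)).

Definition besi (X Y : cantor) : Rbar :=
  LimSup_seq (fun n => INR (ndiff X Y n) / INR n).

Definition join (X Y : cantor) : cantor :=
  fun n => if Nat.even n then X (Nat.div2 n) else Y (Nat.div2 n).

Definition b_spec (b : R -> cantor) : Prop :=
  b 0 = (fun _ => false) /\
  b 1 = (fun _ => true) /\
  (forall r, 0 < r <= 1/2 -> b r = join (fun _ => false) (b (2 * r))) /\
  (forall r, 1/2 <= r < 1 -> b r = join (b (2 * r - 1)) (fun _ => true)).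

(* b is the (unique) function satisfying these equations. *)
Definition b : R -> cantor :=
  epsilon (inhabits (fun _ _ => false)) b_spec.

Fixpoint nj (j : nat) : nat :=
  match j with
  | O => O
  | S j' => (nj j' + j')%nat
  end.

Definition Mix_spec (X0 X1 : cantor) (r : R) (Z : cantor) : Prop :=
  forall j m, (nj j <= m < nj (S j))%nat ->
    Z m = (if b r j then X1 m else X0 m).

Definition Mix (X0 X1 : cantor) (r : R) : cantor :=
  epsilon (inhabits (fun _ => false)) (Mix_spec X0 X1 r).

(* The proof reduces the distance between Mix(X0,X1,r) and Mix(X0,X1,s) to
   the density of the set of chunks on which b(r) and b(s) differ.

   - Counting: [count f n] counts the [m < n] with [f m]; the number of
     ones of a join splits between its even and odd halves.
   - [b] is only given by choice, so we first build a solution of its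
     defining equations (by recursion on the position, with fuel).
   - [b] is monotone in [r], and the proportion of ones among the first
     [N] terms of [b t] is [t] up to an error [e N + C] uniform in [t]
     (the recursion of [b] halves [N] at cost [+1]). Hence [b r] and
     [b s] differ on at most [(|r - s| + 2e) N + 2C] of the first [N] places.
   - Two sequences agreeing on all chunks [I_j] outside a set of density
     [a] are at Besicovitch distance at most [2a], since the chunk [I_J]
     has [J] elements while [I_0 ∪ ... ∪ I_(J-1)] has about [J^2/2].
   Taking [|r - s|] and [e] small gives the theorem. *)

From Stdlib Require Import Reals Lra Lia List ClassicalEpsilon Arith FunctionalExtensionality.
From Coquelicot Require Import Coquelicot.
Open Scope R_scope.

Fixpoint count (f : nat -> bool) (n : nat) : nat :=
  match n with
  | O => O
  | S n' => (count f n' + if f n' then 1 else 0)%nat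
  end.

Definition differ (X Y : cantor) : nat -> bool :=
  fun m => negb (Bool.eqb (X m) (Y m)).

Lemma ndiff_count (X Y : cantor) (n : nat) : ndiff X Y n = count (differ X Y) n.
Proof.
  unfold ndiff. induction n as [|n IH]; [reflexivity|].
  rewrite seq_S, filter_app, length_app, IH. simpl. unfold differ.
  destruct (negb (Bool.eqb (X n) (Y n))); simpl; lia.
Qed.

Lemma count_le (f : nat -> bool) (n : nat) : (count f n <= n)%nat.
Proof. induction n; simpl; [lia | destruct (f n); lia]. Qed.

Lemma count_ext (f g : nat -> bool) (n : nat) :
  (forall m, f m = g m) -> count f n = count g n.
Proof. intros H; induction n; simpl; [reflexivity | rewrite IHn, H; reflexivity]. Qed.

Lemma count_false (n : nat) : count (fun _ => false) n = 0%nat.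
Proof. induction n; simpl; lia. Qed.

Lemma count_true (n : nat) : count (fun _ => true) n = n.
Proof. induction n; simpl; lia. Qed.

Lemma count_mono (f : nat -> bool) (m n : nat) :
  (m <= n)%nat -> (count f m <= count f n)%nat.
Proof. induction 1; simpl; [lia | destruct (f m0); lia]. Qed.

Lemma count_add_le (f : nat -> bool) (n k : nat) :
  (count f (n + k) <= count f n + k)%nat.
Proof.
  induction k as [|k IH]; [rewrite Nat.add_0_r; lia|].
  rewrite Nat.add_succ_r; simpl; destruct (f (n + k)%nat); lia.
Qed.

Lemma count_add_zero (f : nat -> bool) (n k : nat) :
  (forall m, (n <= m < n + k)%nat -> f m = false) -> count f (n + k) = count f n.
Proof.
  intros H; induction k as [|k IH]; [rewrite Nat.add_0_r; reflexivity|].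
  rewrite Nat.add_succ_r; simpl; rewrite IH by (intros; apply H; lia); rewrite H by lia; lia.
Qed.

(* If [X <= Y] pointwise, the positions where they differ are those where
   only [Y] is true. *)
Lemma count_differ_le (X Y : cantor) (n : nat) :
  (forall m, X m = true -> Y m = true) ->
  (count (differ X Y) n + count X n = count Y n)%nat.
Proof.
  intros H; induction n; simpl; [reflexivity|]. unfold differ at 2.
  destruct (X n) eqn:E; [rewrite (H n E)|destruct (Y n)]; simpl; lia.
Qed.

Lemma count_differ_sym (X Y : cantor) (n : nat) :
  count (differ X Y) n = count (differ Y X) n.
Proof. apply count_ext; intro m; unfold differ; destruct (X m), (Y m); reflexivity. Qed.

Lemma div2_split (n : nat) :
  (Nat.div2 n + Nat.div2 (S n) = n /\ Nat.div2 n <= Nat.div2 (S n) <= S (Nat.div2 n))%nat.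
Proof.
  destruct (Nat.Even_or_Odd n) as [He|Ho].
  - rewrite <- (Nat.Even_div2 n He). destruct He as [k ->]. rewrite Nat.div2_double. lia.
  - rewrite <- (Nat.Odd_div2 n Ho). destruct Ho as [k ->].
    rewrite Nat.add_1_r, Nat.div2_succ_double. lia.
Qed.

Lemma count_join (X Y : cantor) (n : nat) :
  count (join X Y) n = (count X (Nat.div2 (S n)) + count Y (Nat.div2 n))%nat.
Proof.
  induction n as [|n IH]; [reflexivity|].
  change (count (join X Y) (S n)) with (count (join X Y) n + if join X Y n then 1 else 0)%nat.
  rewrite IH; unfold join.
  destruct (Nat.Even_or_Odd n) as [[k ->]|[k ->]].
  - rewrite Nat.even_even.
    change (Nat.div2 (S (S (2 * k)))) with (S (Nat.div2 (2 * k))).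
    rewrite Nat.div2_double, Nat.div2_succ_double; simpl; lia.
  - rewrite Nat.even_odd, Nat.add_1_r.
    change (Nat.div2 (S (S (S (2 * k))))) with (S (Nat.div2 (S (2 * k)))).
    change (Nat.div2 (S (S (2 * k)))) with (S (Nat.div2 (2 * k))).
    rewrite Nat.div2_double, Nat.div2_succ_double; simpl; lia.
Qed.

(** Existence of [b]. [b] is defined by choice among the solutions of
    [b_spec], so we exhibit one solution. Away from [r = 0, 1], position
    [j > 0] of [b r] is decided by the half of [[0,1]] containing [r] and,
    recursively, by position [div2 j < j] of [b (2r)] or [b (2r-1)];
    position [0] is [false] below [1]. *)

Definition b_step (f : R -> cantor) (r : R) (j : nat) : bool :=
  if Rle_dec r 0 then false else
  if Rle_dec 1 r then true else
  if Nat.even j then (if Rle_dec r (1/2) then false else f (2*r-1) (Nat.div2 j))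
  else (if Rle_dec (1/2) r then true else f (2*r) (Nat.div2 j)).

Fixpoint b_approx (k : nat) (r : R) (j : nat) : bool :=
  match k, j with
  | O, _ => false
  | S _, O => if Rle_dec 1 r then true else false
  | S k', S _ => b_step (b_approx k') r j
  end.

Lemma b_approx_stable (k k' j : nat) (r : R) :
  (j < k)%nat -> (j < k')%nat -> b_approx k r j = b_approx k' r j.
Proof.
  revert k' j r; induction k as [|k IH]; intros k' j r Hk Hk'; [lia|].
  destruct k' as [|k']; [lia|]. destruct j as [|j]; [reflexivity|].
  assert (Nat.div2 (S j) <= j)%nat by apply Nat.le_div2.
  cbn [b_approx]; unfold b_step.
  destruct (Rle_dec r 0), (Rle_dec 1 r), (Nat.even (S j)),
    (Rle_dec r (1/2)), (Rle_dec (1/2) r); try reflexivity; apply IH; lia.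
Qed.

Definition b_sol (r : R) : cantor := fun j => b_approx (S j) r j.

Lemma b_sol_step (r : R) (j : nat) : (0 < j)%nat -> b_sol r j = b_step b_sol r j.
Proof.
  intros Hj; destruct j as [|j]; [lia|].
  assert (Nat.div2 (S j) <= j)%nat by apply Nat.le_div2.
  change (b_sol r (S j)) with (b_step (b_approx (S j)) r (S j)); unfold b_step, b_sol.
  rewrite !(b_approx_stable (S j) (S (Nat.div2 (S j)))) by lia.
  reflexivity.
Qed.

Lemma b_sol_zero (j : nat) : b_sol 0 j = false.
Proof.
  destruct j as [|j].
  - unfold b_sol; cbn; destruct (Rle_dec 1 0); [lra|reflexivity].
  - rewrite b_sol_step by lia; unfold b_step; destruct (Rle_dec 0 0); [reflexivity|lra].
Qed.

Lemma b_sol_one (j : nat) : b_sol 1 j = true.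
Proof.
  destruct j as [|j].
  - unfold b_sol; cbn; destruct (Rle_dec 1 1); [reflexivity|lra].
  - rewrite b_sol_step by lia; unfold b_step.
    destruct (Rle_dec 1 0); [lra|]; destruct (Rle_dec 1 1); [reflexivity|lra].
Qed.

Lemma b_sol_spec : b_spec b_sol.
Proof.
  split; [|split; [|split]]; [| |intros r Hr ..];
    apply functional_extensionality; [exact b_sol_zero|exact b_sol_one| |];
    intros [|j]; unfold join.
  - unfold b_sol; cbn; destruct (Rle_dec 1 r); [lra|reflexivity].
  - rewrite b_sol_step by lia; unfold b_step.
    destruct (Rle_dec r 0); [lra|]; destruct (Rle_dec 1 r); [lra|].
    destruct (Nat.even (S j)).
    + destruct (Rle_dec r (1/2)); [reflexivity|lra].
    + destruct (Rle_dec (1/2) r); [|reflexivity].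
      replace (2*r) with 1 by lra; rewrite b_sol_one; reflexivity.
  - unfold b_sol; cbn; destruct (Rle_dec 1 r); [lra|].
    destruct (Rle_dec 1 (2*r-1)); [lra|reflexivity].
  - rewrite b_sol_step by lia; unfold b_step.
    destruct (Rle_dec r 0); [lra|]; destruct (Rle_dec 1 r); [lra|].
    destruct (Nat.even (S j)).
    + destruct (Rle_dec r (1/2)); [|reflexivity].
      replace (2*r-1) with 0 by lra; rewrite b_sol_zero; reflexivity.
    + destruct (Rle_dec (1/2) r); [reflexivity|lra].
Qed.

Lemma b_ok : b_spec b.
Proof. unfold b; apply epsilon_spec; exists b_sol; exact b_sol_spec. Qed.

Lemma b_zero (n : nat) : b 0 n = false.
Proof. destruct b_ok as [H _]; rewrite H; reflexivity. Qed.

Lemma b_one (n : nat) : b 1 n = true.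
Proof. destruct b_ok as [_ [H _]]; rewrite H; reflexivity. Qed.

Lemma b_lower (r : R) (n : nat) :
  0 < r <= 1/2 -> b r n = join (fun _ => false) (b (2*r)) n.
Proof. intros Hr; destruct b_ok as [_ [_ [H _]]]; rewrite (H r Hr); reflexivity. Qed.

Lemma b_upper (r : R) (n : nat) :
  1/2 <= r < 1 -> b r n = join (b (2*r-1)) (fun _ => true) n.
Proof. intros Hr; destruct b_ok as [_ [_ [_ H]]]; rewrite (H r Hr); reflexivity. Qed.

(* Position 0 is [false] below 1: on the upper half it is inherited from
   [b (2r-1)], and [r |-> 2r-1] doubles the distance to 1, so after
   finitely many steps [r] lands in [[0,1/2]]. *)
Lemma b_head_aux (k : nat) (t : R) :
  0 <= t < 1 -> 1 <= INR (S k) * (1 - t) -> b t 0%nat = false.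
Proof.
  revert t; induction k as [|k IH]; intros t Ht Hk.
  - replace t with 0 by (simpl in Hk; lra); apply b_zero.
  - destruct (Req_dec t 0) as [->|Ht0]; [apply b_zero|].
    destruct (Rle_dec t (1/2)).
    + rewrite b_lower by lra; reflexivity.
    + rewrite b_upper by lra; unfold join; simpl Nat.even; simpl Nat.div2.
      apply IH; [lra|]. rewrite !S_INR in *.
      assert (0 <= INR k * (1 - t)) by (apply Rmult_le_pos; [apply pos_INR|lra]). nra.
Qed.

Lemma b_head (t : R) : 0 <= t < 1 -> b t 0%nat = false.
Proof.
  intros Ht; destruct (INR_archimed (1 - t) 1) as [k Hk]; [lra|].
  apply (b_head_aux k); [exact Ht|]. rewrite S_INR; lra.
Qed.

Lemma b_mono (n : nat) (r s : R) :
  0 <= r <= s -> s <= 1 -> b r n = true -> b s n = true.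
Proof.
  revert r s; induction n as [n IH] using lt_wf_ind; intros r s Hrs Hs Hb.
  destruct (Req_dec s 1) as [->|Hs1]; [apply b_one|].
  destruct (Req_dec r 0) as [->|Hr0]; [rewrite b_zero in Hb; discriminate|].
  destruct n as [|n].
  { rewrite b_head in Hb by lra; discriminate. }
  assert (Hd : (Nat.div2 (S n) < S n)%nat) by (apply Nat.lt_div2; lia).
  destruct (Rle_dec r (1/2)).
  - rewrite b_lower in Hb by lra; unfold join in Hb.
    destruct (Nat.even (S n)) eqn:He; [discriminate|].
    destruct (Rle_dec s (1/2)).
    + rewrite b_lower by lra; unfold join; rewrite He.
      apply (IH _ Hd (2*r)); [lra|lra|exact Hb].
    + rewrite b_upper by lra; unfold join; rewrite He; reflexivity.
  - rewrite b_upper in Hb by lra; rewrite b_upper by lra; unfold join in *.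
    destruct (Nat.even (S n)); [|reflexivity].
    apply (IH _ Hd (2*r-1)); [lra|lra|exact Hb].
Qed.

Lemma count_b_lower (t : R) (N : nat) :
  0 <= t <= 1/2 -> count (b t) N = count (b (2*t)) (Nat.div2 N).
Proof.
  intros Ht; destruct (Req_dec t 0) as [->|Ht0].
  { rewrite Rmult_0_r, !(count_ext (b 0) (fun _ => false)), !count_false
      by exact b_zero; reflexivity. }
  rewrite (count_ext _ _ _ (fun n => b_lower t n ltac:(lra))), count_join, count_false.
  apply Nat.add_0_l.
Qed.

Lemma count_b_upper (t : R) (N : nat) :
  1/2 <= t <= 1 ->
  count (b t) N = (count (b (2*t-1)) (Nat.div2 (S N)) + Nat.div2 N)%nat.
Proof.
  intros Ht; destruct (Req_dec t 1) as [->|Ht1].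
  { replace (2*1-1) with 1 by lra.
    rewrite !(count_ext (b 1) (fun _ => true)), !count_true by exact b_one.
    pose proof (div2_split N); lia. }
  rewrite (count_ext _ _ _ (fun n => b_upper t n ltac:(lra))), count_join, count_true.
  reflexivity.
Qed.

Definition excess (t : R) (N : nat) : R := INR (count (b t) N) - t * INR N.

Lemma excess_step (t : R) (N : nat) :
  (2 <= N)%nat -> 0 <= t <= 1 ->
  exists M t', (M < N)%nat /\ (2 * M <= S N)%nat /\ 0 <= t' <= 1 /\
    Rabs (excess t N) <= Rabs (excess t' M) + 1.
Proof.
  intros HN Ht; unfold excess.
  destruct (div2_split N) as [Hsum Hle].
  assert (Hsum' : INR (Nat.div2 N) + INR (Nat.div2 (S N)) = INR N)
    by (rewrite <- plus_INR; f_equal; exact Hsum).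
  assert (Hle' : INR (Nat.div2 N) <= INR (Nat.div2 (S N)) <= INR (Nat.div2 N) + 1)
    by (rewrite <- S_INR; split; apply le_INR; lia).
  destruct (Rle_dec t (1/2)).
  - exists (Nat.div2 N), (2*t). split; [lia|]. split; [lia|]. split; [lra|].
    rewrite count_b_lower by lra. split_Rabs; nra.
  - exists (Nat.div2 (S N)), (2*t-1). split; [lia|]. split; [lia|]. split; [lra|].
    rewrite count_b_upper, plus_INR by lra. split_Rabs; nra.
Qed.

(* Below a threshold [N0] the trivial bound [N <= N0] applies; above it,
   one step of [excess_step] halves [N] at the cost of [+1], which the
   slack [e N / 2] absorbs. *)
Lemma ones_density (e : R) :
  0 < e -> exists C, 0 <= C /\
    forall N t, 0 <= t <= 1 -> Rabs (excess t N) <= e * INR N + C.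
Proof.
  intros He; destruct (INR_archimed e (2 + e) He) as [N0 HN0].
  exists (INR N0); split; [apply pos_INR|].
  intros N; induction N as [N IH] using lt_wf_ind; intros t Ht.
  pose proof (pos_INR N).
  destruct (le_lt_dec N N0) as [Hle|Hlt].
  - apply le_INR in Hle. pose proof (le_INR _ _ (count_le (b t) N)).
    pose proof (pos_INR (count (b t) N)).
    unfold excess; split_Rabs; nra.
  - assert (HN : e * INR N > 2 + e) by (apply lt_INR in Hlt; nra).
    assert (HN2 : (2 <= N)%nat).
    { destruct N as [|[|N]]; [simpl in HN; lra|simpl in HN; lra|lia]. }
    destruct (excess_step t N HN2 Ht) as [M [t' [HM [H2M [Ht' Hstep]]]]].
    specialize (IH M HM t' Ht').
    apply le_INR in H2M; rewrite mult_INR, (S_INR N) in H2M; simpl (INR 2) in H2M.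
    assert (e * (2 * INR M) <= e * (INR N + 1)) by (apply Rmult_le_compat_l; lra).
    lra.
Qed.

(* Consequently [b r] and [b s] differ on a proportion about [|r-s|]:
   by monotonicity the differences are the surplus ones of the larger. *)
Lemma differ_density (e : R) :
  0 < e -> exists C, 0 <= C /\
    forall r s N, 0 <= r <= 1 -> 0 <= s <= 1 ->
      INR (count (differ (b r) (b s)) N) <= (Rabs (r - s) + 2 * e) * INR N + 2 * C.
Proof.
  intros He; destruct (ones_density e He) as [C [HC Hdens]].
  exists C; split; [exact HC|].
  assert (Hle : forall r s N, 0 <= r <= s -> s <= 1 ->
    INR (count (differ (b r) (b s)) N) <= (Rabs (r - s) + 2 * e) * INR N + 2 * C).
  { intros r s N Hrs Hs.
    pose proof (count_differ_le (b r) (b s) N (fun m => b_mono m r s Hrs Hs)) as Hc.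
    apply (f_equal INR) in Hc; rewrite plus_INR in Hc.
    pose proof (Hdens N r ltac:(lra)); pose proof (Hdens N s ltac:(lra)).
    unfold excess in *. rewrite Rabs_left1 by lra. split_Rabs; lra. }
  intros r s N Hr Hs; destruct (Rle_dec r s).
  - apply Hle; lra.
  - rewrite count_differ_sym, Rabs_minus_sym; apply Hle; lra.
Qed.

Lemma nj_mono (j j' : nat) : (j <= j')%nat -> (nj j <= nj j')%nat.
Proof. induction 1; simpl; lia. Qed.

Lemma nj_formula (J : nat) : (2 * nj J + J = J * J)%nat.
Proof. induction J; simpl nj; nia. Qed.

Lemma chunk_exists (m : nat) : exists j, (nj j <= m < nj (S j))%nat.
Proof.
  induction m as [|m [j Hj]]; [exists 1%nat; simpl; lia|].
  destruct (Nat.eq_dec (S m) (nj (S j))); [exists (S j) | exists j]; simpl in *; lia.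
Qed.

Lemma chunk_unique (j j' m : nat) :
  (nj j <= m < nj (S j))%nat -> (nj j' <= m < nj (S j'))%nat -> j = j'.
Proof.
  intros H1 H2; destruct (lt_eq_lt_dec j j') as [[H|H]|H]; [|exact H|].
  - pose proof (nj_mono (S j) j' H); lia.
  - pose proof (nj_mono (S j') j H); lia.
Qed.

Lemma Mix_chunk (X0 X1 : cantor) (r : R) (j m : nat) :
  (nj j <= m < nj (S j))%nat -> Mix X0 X1 r m = if b r j then X1 m else X0 m.
Proof.
  revert j m; unfold Mix; apply epsilon_spec.
  destruct (choice (fun m j => (nj j <= m < nj (S j))%nat) chunk_exists) as [ch Hch].
  exists (fun m => if b r (ch m) then X1 m else X0 m).
  intros j m Hm; rewrite (chunk_unique (ch m) j m (Hch m) Hm); reflexivity.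
Qed.

Lemma count_chunks_le (Z W : cantor) (p : nat -> bool) (J : nat) :
  (forall j m, p j = false -> (nj j <= m < nj (S j))%nat -> Z m = W m) ->
  (count (differ Z W) (nj J) <= J * count p J)%nat.
Proof.
  intros Hagree; induction J as [|J IH]; [simpl; lia|].
  change (nj (S J)) with (nj J + J)%nat; simpl count.
  destruct (p J) eqn:Hp.
  - pose proof (count_add_le (differ Z W) (nj J) J); nia.
  - rewrite count_add_zero; [nia|].
    intros m Hm; unfold differ; rewrite (Hagree J m Hp) by (simpl; lia).
    rewrite Bool.eqb_reflx; reflexivity.
Qed.

Lemma Mix_agree (X0 X1 : cantor) (r s : R) (j m : nat) :
  differ (b r) (b s) j = false -> (nj j <= m < nj (S j))%nat ->
  Mix X0 X1 r m = Mix X0 X1 s m.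
Proof.
  intros Hj Hm; rewrite !(Mix_chunk X0 X1 _ j m Hm); unfold differ in Hj.
  destruct (b r j), (b s j); first [reflexivity | discriminate].
Qed.

(** If [Z] and [W] agree
    on the chunks outside a set [p] of density at most [a], they differ on
    a proportion of at most about [2a] of the positions: below [n] with
    [n] in [I_J] they differ on at most [(J+1) * |p ∩ [0, J]|] places,
    while [n >= nj J ~ J^2/2]. *)
Lemma besi_chunked_lt (Z W : cantor) (p : nat -> bool) (a C eps : R) :
  (forall j m, p j = false -> (nj j <= m < nj (S j))%nat -> Z m = W m) ->
  (forall N, INR (count p N) <= a * INR N + C) ->
  0 <= a -> 0 <= C -> 2 * a < eps ->
  Rbar_lt (besi Z W) (Finite eps).
Proof.
  intros Hagree Hp Ha HC Heps.
  set (c := (2 * a + eps) / 2).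
  destruct (INR_archimed (c - 2 * a) (c + 6 * a + 4 * C)) as [K HK]; [unfold c; lra|].
  apply (Rbar_le_lt_trans _ (Finite c)); [|simpl; unfold c; lra].
  unfold besi; rewrite <- (LimSup_seq_const c).
  apply LimSup_le; exists (nj (Nat.max K 2)); intros n Hn.
  destruct (chunk_exists n) as [J HJ].
  assert (HJK : (Nat.max K 2 <= J)%nat).
  { destruct (le_lt_dec (Nat.max K 2) J) as [|Hlt]; [assumption|].
    pose proof (nj_mono (S J) _ Hlt); lia. }
  assert (Hcount : (ndiff Z W n <= S J * count p (S J))%nat).
  { rewrite ndiff_count; eapply Nat.le_trans; [apply count_mono, Nat.lt_le_incl, HJ|].
    exact (count_chunks_le Z W p (S J) Hagree). }
  apply le_INR in Hcount; rewrite mult_INR, S_INR in Hcount.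
  pose proof (Hp (S J)) as HpJ; rewrite S_INR in HpJ.
  (* Lower bound [2 n >= J^2 - J]. *)
  pose proof (nj_formula J) as Hnj.
  apply (f_equal INR) in Hnj; rewrite plus_INR, !mult_INR in Hnj; simpl (INR 2) in Hnj.
  assert (Hn' : INR (nj J) <= INR n) by (apply le_INR; lia).
  assert (HJ2 : 2 <= INR J) by (replace 2 with (INR 2) by reflexivity; apply le_INR; lia).
  assert (HKJ : INR K <= INR J) by (apply le_INR; lia).
  set (x := INR J) in *.
  assert (Hpos : 0 < INR n) by nra.
  apply Rle_div_l; [exact Hpos|].
  (* Asymptotics: [(J+1)(a(J+1)+C) <= c (J^2-J)/2] once [J >= K]. *)
  assert (Hquad : (c - 2 * a) * x * x >= (c + 6 * a + 4 * C) * x).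
  { assert (INR K * (c - 2 * a) <= x * (c - 2 * a))
      by (apply Rmult_le_compat_r; [unfold c|]; lra).
    nra. }
  assert (Hprod : (x + 1) * INR (count p (S J)) <= (x + 1) * (a * (x + 1) + C))
    by (apply Rmult_le_compat_l; lra).
  assert (Hc : 0 <= c) by (unfold c; lra).
  nra.
Qed.

Theorem lemma2p8 (X0 X1 : cantor) :
  forall r, 0 <= r <= 1 ->
  forall eps, 0 < eps ->
  exists delta, 0 < delta /\
    forall s, 0 <= s <= 1 -> Rabs (s - r) < delta ->
      Rbar_lt (besi (Mix X0 X1 r) (Mix X0 X1 s)) (Finite eps).
Proof.
  intros r Hr eps Heps; exists (eps / 8); split; [lra|]; intros s Hs Hsr.
  destruct (differ_density (eps / 16) ltac:(lra)) as [C [HC Hdiff]].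
  apply (besi_chunked_lt _ _ (differ (b r) (b s)) (Rabs (r - s) + 2 * (eps / 16)) (2 * C)).
  - intros j m; apply Mix_agree.
  - intros N; apply Hdiff; assumption.
  - pose proof (Rabs_pos (r - s)); lra.
  - lra.
  - rewrite Rabs_minus_sym; lra.
Qed.
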